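(* Let $n>s\ge1$ be integers, $t_0,\dots,t_s$ independent indeterminates, $g(x)=\sum_{k=0}^st_kx^k$, $B=(b_{ij})_{1\le i,j\le s}=M_s(g,g')$, and let $\bar B=(\bar b_{ij})_{1\le i,j\le s}$ with $$\bar b_{ij}=b_{ij}-\frac{(s-i+1)(s-j+1)}{n}\,t_{s-i+1}t_{s-j+1}.$$ Write the characteristic polynomial of $\bar B$ as $\det(xI_s-\bar B)=\sum_{k=0}^sh_{s-k}(t_0,\dots,t_s)x^{s-k}$. Then for every $k$ with $1\le k\le s$, $h_{s-k}(t_0,\dots,t_s)$ is a nonzero polynomial in $\mathbb{R}[t_0,\dots,t_s]$.
   Context: Bezoutian: for polynomials $f_1,f_2$ over a field $F$ of characteristic $0$ and an integer $n\ge\max\{\deg f_1,\deg f_2\}$, write $\frac{f_1(x)f_2(y)-f_1(y)f_2(x)}{x-y}=\sum_{i,j=1}^n\alpha_{ij}x^{n-i}y^{n-j}\in F[x,y]$ and set $M_n(f_1,f_2)=(\alpha_{ij})_{1\le i,j\le n}$; here $F=\mathbb{R}(t_0,\dots,t_s)$. *)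

From HB Require Import structures.
From mathcomp Require Import all_boot all_order all_algebra.
Set Implicit Arguments. Unset Strict Implicit. Unset Printing Implicit Defensive.
Import Order.TTheory GRing.Theory Num.Theory.
Local Open Scope ring_scope.

(* mpoly R m : the polynomial ring R[t_0,...,t_(m-1)], built as iterated
   univariate polynomial rings: R[t_0][t_1]...[t_(m-1)]. *)
Fixpoint mpoly (R : idomainType) (m : nat) : idomainType :=
  match m with
  | 0 => R
  | m'.+1 => ({poly mpoly R m'} : idomainType)
  end.

(* the indeterminate t_k in R[t_0,...,t_(m-1)] (meaningful for k < m) *)
Fixpoint tvar (R : idomainType) (m k : nat) : mpoly R m :=
  match m return mpoly R m with
  | 0 => 0
  | m'.+1 => if k == m' then ('X : {poly mpoly R m'})
             else ((tvar R m' k)%:P : {poly mpoly R m'})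
  end.

Fixpoint mcst (R : idomainType) (m : nat) (c : R) : mpoly R m :=
  match m return mpoly R m with
  | 0 => c
  | m'.+1 => ((mcst m' c)%:P : {poly mpoly R m'})
  end.

(* Bezoutian M_n(f1,f2): with x the outer and y the inner variable of
   {poly {poly A}},  (f1(x) f2(y) - f1(y) f2(x)) / (x - y)
     = sum_{i,j=1}^n alpha_ij x^(n-i) y^(n-j),   M_n(f1,f2) = (alpha_ij).
   Here 0-indexed: entry (i,j) is the coefficient of x^(n-1-i) y^(n-1-j). *)
Definition bezoutian (A : idomainType) (n : nat) (f1 f2 : {poly A}) : 'M[A]_n :=
  let num : {poly {poly A}} := f1 ^:P * f2%:P - f1%:P * f2 ^:P in
  let Q := num %/ ('X - ('X)%:P) in
  \matrix_(i < n, j < n) (Q`_(n - i.+1))`_(n - j.+1).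

Definition gpoly (R : idomainType) (s : nat) : {poly mpoly R s.+1} :=
  \poly_(k < s.+1) tvar R s.+1 k.

(* Bbar, 0-indexed: row i corresponds to the paper's i+1, so
   (s - (i+1) + 1) = s - i. *)
Definition Bbar (R : fieldType) (n s : nat) : 'M[mpoly R s.+1]_s :=
  let B := bezoutian s (gpoly R s) (gpoly R s)^`() in
  \matrix_(i < s, j < s)
    (B i j - mcst s.+1 (((s - i) * (s - j))%:R / n%:R : R)
             * tvar R s.+1 (s - i) * tvar R s.+1 (s - j)).

From HB Require Import structures.
From mathcomp Require Import all_boot all_order all_algebra.
From mathcomp Require Import zify ring.
Import Order.TTheory GRing.Theory Num.Theory.
Local Open Scope ring_scope.

(* Specialization of the indeterminates is a ring morphism commuting with
   [char_poly], so it suffices to find one real point at which the coefficients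
   do not vanish. At [g = x^s + 1] the Bezoutian of [g] and [g' = s x^(s-1)] is
   explicit, and [Bbar] becomes [d = s - s^2/n > 0] in the top left corner and
   [-s] on the antidiagonal of the other rows. A unipotent conjugation makes
   this triangular, with characteristic polynomial
   [(x - d) (x + s)^e (x^2 - s^2)^q], where [s - 1 = 2q + e] and [e <= 1].
   The coefficients of [(x^2 - s^2)^q] vanish in odd degree and strictly
   alternate in sign in even degree; multiplying by [x - d] and [x + s] only
   adds terms of equal sign, except that for [e = 1] the odd coefficients are
   multiples of [s - d = s^2/n != 0]. *)

Fixpoint mpoly_eval (R : idomainType) (f : nat -> R) (m : nat) :
    {rmorphism mpoly R m -> R} :=
  match m return {rmorphism mpoly R m -> R} with
  | 0 => (idfun : {rmorphism R -> R})
  | m'.+1 => horner_morph (fun a => mulrC (f m') (mpoly_eval R f m' a))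
  end.
Arguments mpoly_eval {R} f m.

Lemma mpoly_eval_tvar (R : idomainType) (f : nat -> R) m k :
  (k < m)%N -> mpoly_eval f m (tvar R m k) = f k.
Proof.
elim: m => [//|m IHm] /=; rewrite ltnS leq_eqVlt => /orP[/eqP ->|lt_km].
  by rewrite eqxx horner_morphX.
by rewrite (ltn_eqF lt_km) horner_morphC IHm.
Qed.

Lemma mpoly_eval_mcst (R : idomainType) (f : nat -> R) m c :
  mpoly_eval f m (mcst m c) = c.
Proof. by elim: m => [//|m IHm] /=; rewrite horner_morphC IHm. Qed.

Lemma bezoutian_map {A B : idomainType} (phi : {rmorphism A -> B}) n
    (f1 f2 : {poly A}) (Q : {poly {poly B}}) :
  let g1 := map_poly phi f1 in let g2 := map_poly phi f2 in
  Q * ('X - 'X%:P) = g1 ^:P * g2%:P - g1%:P * g2 ^:P ->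
  forall i j, phi (bezoutian n f1 f2 i j) = (Q`_(n - i.+1))`_(n - j.+1).
Proof.
move=> g1 g2 defQ i j; rewrite mxE.
set num := (_ - _ : {poly {poly A}}).
have /factor_theorem[q def_num] : root num 'X.
  by rewrite /root /num !hornerE -!/(comp_poly _ _) !comp_polyXr subrr.
rewrite def_num Pdiv.IdomainMonic.mulpK ?monicXsubC //.
have map_XsubX : map_poly (map_poly phi) ('X - 'X%:P) = 'X - 'X%:P.
  by rewrite rmorphB /= map_polyX map_polyC /= map_polyX.
suff <- : map_poly (map_poly phi) q = Q by rewrite !coef_map.
apply: (@mulIf _ ('X - 'X%:P)); first by rewrite polyXsubC_eq0.
rewrite defQ -map_XsubX -rmorphM /= -def_num /num rmorphB /= !rmorphM /=.
rewrite !map_polyC /= -!map_poly_comp.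
by congr (_ * _ - _ * _); apply: eq_map_poly => x /=; rewrite map_polyC.
Qed.

Lemma sum_ord_eq_natr (R : nzSemiRingType) m b (F : nat -> R) :
  \sum_(i < m) (((i : nat) == b)%:R * F i) = if (b < m)%N then F b else 0.
Proof.
rewrite -(@big_ord1_eq R 0 +%R F b m) [RHS]big_mkcond /=.
by apply: eq_bigr => i _; case: (_ == _); rewrite ?mul1r ?mul0r.
Qed.

Lemma prod_ord_if_ltn (R : pzSemiRingType) m u (x y : R) : (u <= m)%N ->
  \prod_(i < m) (if (i < u)%N then x else y) = x ^+ u * y ^+ (m - u).
Proof.
move=> le_um; rewrite -(big_mkord xpredT (fun i => if (i < u)%N then x else y)).
rewrite (big_cat_nat (leq0n u) le_um) /= -[u in x ^+ u]subn0 -!prodr_const_nat.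
congr (_ * _); apply: eq_big_nat => i /andP[le_ui lt_im].
  by rewrite lt_im.
by rewrite ltnNge le_ui.
Qed.

Lemma coef_char_poly_map_neq0 {A B : comNzRingType} (phi : {rmorphism A -> B})
    n (M : 'M[A]_n) i :
  (char_poly (map_mx phi M))`_i != 0 -> (char_poly M)`_i != 0.
Proof.
by rewrite -map_char_poly coef_map; apply: contra_neq => ->; exact: rmorph0.
Qed.

Lemma char_poly_similar {R : comNzRingType} {s} {A B U : 'M[R]_s} :
  U *m A = B *m U -> \det U = 1 -> char_poly A = char_poly B.
Proof.
move=> UA_BU detU.
have : map_mx polyC U *m char_poly_mx A = char_poly_mx B *m map_mx polyC U.
  by rewrite /char_poly_mx mulmxBr mulmxBl -!map_mxM UA_BU scalar_mxC.
move/(congr1 determinant); rewrite !det_mulmx det_map_mx detU rmorph1.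
by rewrite mul1r mulr1.
Qed.

Section BezoutianXnAdd1.
Variable R : comNzRingType.
Implicit Types (m a b : nat).

Lemma coef2_Xn_mulC k l a b :
  (('X^k * ('X^l)%:P : {poly {poly R}})`_a)`_b = ((a == k) && (b == l))%:R.
Proof.
rewrite coefMC coefXn; case: (a == k); last by rewrite mul0r coef0.
by rewrite mul1r coefXn.
Qed.

Definition bezout_quot_Xn_add1 m : {poly {poly R}} :=
  ('X^m * ('X^m)%:P) *+ m.+1
  - (\sum_(i < m) 'X^(m.-1 - i) * ('X^i)%:P) *+ m.+1.

Lemma bezout_quot_Xn_add1P m :
  let f : {poly R} := 'X^(m.+1) + 1 in
  bezout_quot_Xn_add1 m * ('X - 'X%:P) = f^:P * f^`()%:P - f%:P * f^`()^:P.
Proof.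
rewrite /= derivD derivXn derivC addr0 /bezout_quot_Xn_add1.
rewrite !rmorphD !rmorph1 !rmorphMn /= !map_polyXn !rmorphXn /=.
under eq_bigr => i _ do rewrite rmorphXn.
set x : {poly {poly R}} := 'X; set y : {poly {poly R}} := ('X : {poly R})%:P.
have sumXY : (\sum_(i < m) x ^+ (m.-1 - i) * y ^+ i) * (x - y) = x ^+ m - y ^+ m.
  by rewrite subrXX mulrC.
by rewrite mulrBl (mulrnAl (\sum_(i < m) _)) sumXY !exprS; ring.
Qed.

Lemma coef_bezout_quot_Xn_add1 m a b :
  ((bezout_quot_Xn_add1 m)`_a)`_b =
  (((a == m) && (b == m))%:R - ((b < m)%N && (a == m.-1 - b)%N)%:R) *+ m.+1.
Proof.
rewrite !(coefB, coefMn) !coef_sum coef2_Xn_mulC mulrnBl.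
congr (_ - _ *+ _).
under eq_bigr => i _ do rewrite coef2_Xn_mulC andbC -mulnb natrM (eq_sym b).
by rewrite (sum_ord_eq_natr _ _ _ (fun i => (a == (m.-1 - i)%N)%:R)); case: ltnP.
Qed.

End BezoutianXnAdd1.

(* [d] in the top left corner and [a] on the antidiagonal [i + j = s], which
   misses row and column 0 since indices are smaller than [s]. *)
Definition corner_antidiag_mx {R : nzRingType} s (d a : R) : 'M[R]_s :=
  \matrix_(i < s, j < s)
    ((((i : nat) == 0%N) && ((j : nat) == 0%N))%:R * d
     + ((i + j)%N == s)%:R * a).

Section CornerAntidiag.
Variables (R : comNzRingType) (s : nat) (d a : R).

Let lam (i : nat) : R :=
  if i == 0%N then d else if (2 * i <= s)%N then a else - a.

(* [U] adds row [s - i] to row [i] when [2 i < s]: this conjugates each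
   antidiagonal block [[0, a], [a, 0]] into the triangular [[a, 0], [a, -a]]. *)
Let U : 'M[R]_s := \matrix_(i, j)
  (((i : nat) == j)%:R + (((j : nat) == s - i)%N && (2 * i < s)%N)%:R).
Let L : 'M[R]_s := \matrix_(i, j)
  (((i : nat) == j)%:R * lam i
   + (((j : nat) == s - i)%N && (s < 2 * i)%N)%:R * a).

Ltac decide_nat_tests := repeat match goal with
 | |- context [ nat_of_bool ?b ] =>
     (rewrite (_ : b = true); last by lia) || (rewrite (_ : b = false); last by lia)
 | |- context [ if ?b then _ else _ ] =>
     (rewrite (_ : b = true); last by lia) || (rewrite (_ : b = false); last by lia)
 end.

Lemma corner_antidiag_conj_trig : U *m corner_antidiag_mx s d a = L *m U.
Proof.
apply/matrixP => i j; rewrite !mxE.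
have hi := ltn_ord i; have hj := ltn_ord j.
under eq_bigr => k _ do rewrite !mxE mulrDl (eq_sym (nat_of_ord i)).
under [RHS]eq_bigr => k _ do rewrite !mxE mulrDl (eq_sym (nat_of_ord i)) -mulrA.
rewrite !big_split /=.
under [X in _ + X = _]eq_bigr => k _ do rewrite -mulnb natrM -mulrA.
under [X in _ = _ + X]eq_bigr => k _ do rewrite -mulnb natrM -!mulrA.
pose M k := (((k == 0%N) && ((j : nat) == 0%N))%:R * d + ((k + j)%N == s)%:R * a).
pose V k : R :=
  (k == j :> nat)%:R + (((j : nat) == (s - k)%N) && (2 * k < s)%N)%:R.
rewrite (sum_ord_eq_natr _ _ i M).
rewrite (sum_ord_eq_natr _ _ (s - i)%N (fun k => _ * M k)).
rewrite (sum_ord_eq_natr _ _ i (fun k => lam i * V k)).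
rewrite (sum_ord_eq_natr _ _ (s - i)%N (fun k => _ * (a * V k))) hi /M /V /lam.
case: (ltngtP (2 * i) s) => Hi; (have [ej|ej] := eqVneq (j : nat) i);
  (have [ej2|ej2] := eqVneq (i + j)%N s); (have [i0|i0] := eqVneq (i : nat) 0%N);
  (have [j0|j0]:= eqVneq (j : nat) 0%N);
  first [exfalso; lia | decide_nat_tests; rewrite /=; ring].
Qed.

Lemma det_corner_antidiag_conj : \det U = 1.
Proof.
rewrite -det_tr det_trig.
  rewrite big1 // => i _; rewrite !mxE eqxx.
  by rewrite (_ : (_ && _) = false) ?addr0 //; have := ltn_ord i; lia.
apply/is_trig_mxP => i j lt_ij; rewrite !mxE.
rewrite (_ : (j == i :> nat) = false); last by lia.
by rewrite (_ : (_ && _) = false) ?addr0 //; lia.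
Qed.

Lemma char_poly_corner_antidiag_prod :
  char_poly (corner_antidiag_mx s d a) = \prod_(i < s) ('X - (lam i)%:P).
Proof.
rewrite (char_poly_similar corner_antidiag_conj_trig det_corner_antidiag_conj).
rewrite char_poly_trig.
  apply: eq_bigr => i _; rewrite mxE eqxx mul1r.
  by rewrite (_ : (_ && _) = false) ?mul0r ?addr0 //; have := ltn_ord i; lia.
apply/is_trig_mxP => i j lt_ij; rewrite !mxE.
rewrite (_ : (i == j :> nat) = false); last by lia.
by rewrite (_ : (_ && _) = false) ?mul0r ?addr0 //; lia.
Qed.

End CornerAntidiag.

Lemma char_poly_corner_antidiag (R : comNzRingType) m (d a : R) :
  char_poly (corner_antidiag_mx m.+1 d a) =
  ('X - d%:P) * ('X - a%:P) ^+ odd m * ('X^2 - (a ^+ 2)%:P) ^+ m./2.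
Proof.
rewrite char_poly_corner_antidiag_prod big_ord_recl /= -mulrA; congr (_ * _).
have -> : \prod_(i < m) ('X - (if (2 * (bump 0 i) <= m.+1)%N then a else - a)%:P)
        = \prod_(i < m) (if (i < uphalf m)%N then 'X - a%:P else 'X - (- a)%:P).
  apply: eq_bigr => i _; rewrite gtn_uphalf_double /bump /= add1n -mul2n.
  by rewrite (_ : (2 * i.+1 <= m.+1)%N = (2 * i < m)%N); [case: ifP | lia].
rewrite prod_ord_if_ltn ?leq_uphalf_double -?addnn ?leq_addr //.
have -> : (m - uphalf m = m./2)%N.
  by rewrite uphalf_half -{1}(odd_double_half m) -addnn addnA addKn.
by rewrite uphalf_half exprD -mulrA -exprMn rmorphXn subr_sqr polyCN opprK.
Qed.

Section SpecializeAtXnAdd1.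
Variables (R : fieldType) (n m : nat).

(* [t_0 = t_(m+1) = 1] and all other [t_k = 0]: [g] becomes [x^(m+1) + 1] *)
Let phi := mpoly_eval (fun k => (k == 0%N)%:R + (k == m.+1)%:R : R) m.+2.

Lemma gpoly_at_Xn_add1 : map_poly phi (gpoly R m.+1) = 'X^(m.+1) + 1.
Proof.
apply/polyP => i; rewrite coef_map coef_poly coefD coefXn coef1.
case: ltnP => [lt_im|le_mi].
  by rewrite addrC; apply: mpoly_eval_tvar.
transitivity (0 : R); first exact: rmorph0.
have -> : (i == m.+1) = false by lia.
have -> : (i == 0%N) = false by lia.
by rewrite addr0.
Qed.

Lemma Bbar_at_Xn_add1 :
  map_mx phi (Bbar R n m.+1) =
  corner_antidiag_mx m.+1 (m.+1%:R - (m.+1 * m.+1)%:R / n%:R) (- m.+1%:R).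
Proof.
apply/matrixP => i j; rewrite [RHS]mxE mxE /Bbar mxE.
have := bezout_quot_Xn_add1P R m; rewrite /= -gpoly_at_Xn_add1 !(deriv_map phi).
move=> defQ.
have hi := ltn_ord i; have hj := ltn_ord j.
rewrite rmorphB !rmorphM (bezoutian_map phi m.+1 _ _ _ defQ).
rewrite coef_bezout_quot_Xn_add1.
have eval_t k :
    (k < m.+2)%N -> phi (tvar R m.+2 k) = (k == 0%N)%:R + (k == m.+1)%:R.
  exact: mpoly_eval_tvar.
have eval_c c : phi (mcst m.+2 c) = c by exact: mpoly_eval_mcst.
rewrite eval_c !eval_t ?ltnS ?leq_subr //.
have -> : (m.+1 - i.+1 == m)%N = ((i : nat) == 0%N) by lia.
have -> : (m.+1 - j.+1 == m)%N = ((j : nat) == 0%N) by lia.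
have -> : ((m.+1 - j.+1 < m)%N && (m.+1 - i.+1 == m.-1 - (m.+1 - j.+1))%N)
          = (i + j == m.+1)%N by lia.
have -> : (m.+1 - i == 0)%N = false by lia.
have -> : (m.+1 - j == 0)%N = false by lia.
have -> : (m.+1 - i == m.+1)%N = ((i : nat) == 0%N) by lia.
have -> : (m.+1 - j == m.+1)%N = ((j : nat) == 0%N) by lia.
rewrite !add0r.
have [i0|i0] := eqVneq (i : nat) 0%N; have [j0|j0] := eqVneq (j : nat) 0%N.
- rewrite (_ : (i + j == m.+1)%N = false); last by lia.
  rewrite i0 j0 !subn0 /= !mulr1 !mul0r !addr0 natrM; ring.
all: rewrite ?andbF /= !mulr0 mul0r subr0 add0r; set x := (_ == m.+1)%:R.
all: by rewrite mulrN mulr_natr ?mul0r sub0r ?mulNrn.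
Qed.

Lemma char_poly_Bbar_coef_neq0 i :
  let d : R := m.+1%:R - (m.+1 * m.+1)%:R / n%:R in
  (char_poly (corner_antidiag_mx m.+1 d (- m.+1%:R)))`_i != 0 ->
  (char_poly (Bbar R n m.+1))`_i != 0.
Proof. by rewrite /= -Bbar_at_Xn_add1; apply: coef_char_poly_map_neq0. Qed.

End SpecializeAtXnAdd1.

Section AlternatingCoefficients.
Variable R : numDomainType.
Implicit Types (c d a : R) (q i j : nat).

Lemma coefXsqrsubCM c (p : {poly R}) i :
  (('X^2 - c%:P) * p)`_i = (if (i < 2)%N then 0 else p`_(i - 2)) - c * p`_i.
Proof. by rewrite mulrBl coefB coefXnM coefCM. Qed.

Lemma signr_succ {q j : nat} :
  (j < q)%N -> (-1) ^+ (q - j) = - (-1) ^+ (q - j.+1) :> R.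
Proof. by move=> lt_jq; rewrite -(subnSK lt_jq) exprS mulN1r. Qed.

Lemma XsqrsubC_exp_coef_signs c q : 0 < c ->
  let h := ('X^2 - c%:P) ^+ q in
  [/\ forall j, h`_j.*2.+1 = 0,
      forall j, (j <= q)%N -> 0 < (-1) ^+ (q - j) * h`_j.*2
    & forall j, (q < j)%N -> h`_j.*2 = 0].
Proof.
move=> c_gt0; elim: q => [|q [odd0 sign0 high0]] /=.
  split=> [j|j|j]; rewrite expr0 coef1 //.
    by rewrite leqn0 => /eqP ->; rewrite mulr1 ltr01.
  by case: j.
rewrite exprS; split=> [j|j le_jq|j lt_qj]; rewrite coefXsqrsubCM.
- rewrite odd0 mulr0 subr0; case: j => [//|j] /=.
  by rewrite (_ : (j.+1.*2.+1 - 2 = j.*2.+1)%N) ?odd0 //; lia.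
- case: j le_jq => [|j] le_jq /=.
    rewrite sub0r subn0 exprS mulN1r mulrN mulNr opprK mulrCA.
    by apply: mulr_gt0 => //; have := sign0 0%N (leq0n _); rewrite subn0.
  rewrite (_ : (j.+1.*2 - 2 = j.*2)%N); last by lia.
  rewrite mulrBr subSS.
  have pos_j : 0 < (-1) ^+ (q - j) * (('X^2 - c%:P) ^+ q)`_j.*2.
    by apply: sign0; lia.
  have [lt_jq|eq_jq] := ltnP j q; last first.
    by rewrite (high0 j.+1) ?mulr0 ?subr0 //; lia.
  rewrite [X in _ - X]mulrCA [in X in _ - X](signr_succ lt_jq) mulNr mulrN opprK.
  by apply: addr_gt0 => //; apply: mulr_gt0 => //; apply: sign0.
- case: j lt_qj => [//|j] lt_qj /=.
  rewrite (_ : (j.+1.*2 - 2 = j.*2)%N); last by lia.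
  by rewrite !high0 ?mulr0 ?subr0 //; lia.
Qed.

Lemma coef_XsubC_XsqrsubC_exp_neq0 c d q i : 0 < c -> d != 0 -> (i <= q.*2)%N ->
  (('X - d%:P) * ('X^2 - c%:P) ^+ q)`_i != 0.
Proof.
move=> c_gt0 d_neq0 le_iq.
have [odd0 sign _] := XsqrsubC_exp_coef_signs _ q c_gt0.
have even_neq0 j : (j <= q)%N -> (('X^2 - c%:P) ^+ q)`_j.*2 != 0.
  by move/sign; apply: contraTneq => ->; rewrite mulr0 ltxx.
rewrite mulrBl coefB coefXM coefCM.
move: le_iq; rewrite -(odd_double_half i).
case: (odd i); move: (i./2) => j /= le_jq.
  by rewrite add1n /= odd0 mulr0 subr0 even_neq0 //; lia.
rewrite add0n; case: j le_jq => [|j] le_jq /=.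
  by rewrite sub0r oppr_eq0 mulf_neq0 // even_neq0.
by rewrite odd0 sub0r oppr_eq0 mulf_neq0 // even_neq0 //; lia.
Qed.

Lemma coef_XsubC_XsubC_XsqrsubC_exp_neq0 a d q i :
  a < 0 -> 0 < d -> a + d != 0 -> (i <= q.*2.+1)%N ->
  (('X - d%:P) * ('X - a%:P) * ('X^2 - (a ^+ 2)%:P) ^+ q)`_i != 0.
Proof.
move=> a_lt0 d_gt0 ad_neq0 le_iq.
have a2_gt0 : 0 < a ^+ 2 by rewrite expr2 nmulr_rgt0.
have [odd0 sign _] := XsqrsubC_exp_coef_signs _ q a2_gt0.
set h := ('X^2 - (a ^+ 2)%:P) ^+ q.
have even_neq0 j : (j <= q)%N -> h`_j.*2 != 0.
  by move/sign; apply: contraTneq => ->; rewrite mulr0 ltxx.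
have -> : ('X - d%:P) * ('X - a%:P) * h =
          'X * ('X * h) - (a + d)%:P * ('X * h) + (a * d)%:P * h.
  by rewrite polyCD polyCM; ring.
rewrite coefD coefB !coefXM !coefCM !coefXM.
move: le_iq; rewrite -(odd_double_half i).
case: (odd i); move: (i./2) => j /= le_jq.
  rewrite add1n /= odd0 mulr0 addr0.
  have -> : (if j.*2 == 0%N then 0 else h`_j.*2.-1) = 0.
    by case: j {le_jq} => [|j] /=; last exact: odd0.
  by rewrite sub0r oppr_eq0 mulf_neq0 // even_neq0 //; lia.
rewrite add0n; case: j le_jq => [|j] le_jq /=.
  have a_neq0 := ltr0_neq0 a_lt0; have d_neq0 := lt0r_neq0 d_gt0.
  by rewrite mulr0 subr0 add0r !mulf_neq0 ?even_neq0.
(* the two surviving terms both have the sign of [(-1)^(q-j)] *)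
rewrite odd0 mulr0 subr0.
have pos_j : 0 < - (-1) ^+ (q - j.+1) * h`_j.*2.
  by rewrite -signr_succ; [apply: sign; lia | lia].
have pos_j1 : 0 < (-1) ^+ (q - j.+1) * h`_j.+1.*2 by apply: sign; lia.
have ad_gt0 : 0 < - (a * d) by rewrite oppr_gt0 nmulr_rlt0.
set u : R := (-1) ^+ (q - j.+1).
apply: contraTneq (_ : 0 < - u * (h`_j.*2 + a * d * h`_j.+1.*2)) => [->|].
  by rewrite mulr0 ltxx.
have -> : - u * (h`_j.*2 + a * d * h`_j.+1.*2)
          = - u * h`_j.*2 + - (a * d) * (u * h`_j.+1.*2) by ring.
by apply: addr_gt0 => //; apply: mulr_gt0.
Qed.

End AlternatingCoefficients.

Theorem lemma5p3 (R : realFieldType) (n s : nat) :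
  (1 <= s)%N -> (s < n)%N ->
  forall k : nat, (1 <= k <= s)%N ->
    (char_poly (Bbar R n s))`_(s - k) != 0.
Proof.
case: s => [//|m] _ lt_mn k /andP[k_gt0 le_km].
set d : R := m.+1%:R - (m.+1 * m.+1)%:R / n%:R.
set a : R := - m.+1%:R.
have d_gt0 : 0 < d.
  by rewrite subr_gt0 ltr_pdivrMr ?ltr0n -?natrM ?ltr_nat; nia.
have a_lt0 : a < 0 by rewrite oppr_lt0 ltr0n.
have ad_neq0 : a + d != 0.
  by rewrite /a /d addrA addNr add0r oppr_eq0 mulf_neq0 ?invr_eq0 ?pnatr_eq0; lia.
apply: char_poly_Bbar_coef_neq0; rewrite -/d -/a char_poly_corner_antidiag.
have := odd_double_half m.
case: (odd m) => /= [m_odd | m_even].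
  by rewrite expr1 coef_XsubC_XsubC_XsqrsubC_exp_neq0 //; lia.
rewrite expr0 mulr1 coef_XsubC_XsqrsubC_exp_neq0 ?lt0r_neq0 //; last by lia.
by rewrite expr2 nmulr_rgt0.
Qed.
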